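(* Let $H$ be a $d\times d$ Hermitian matrix with eigendecomposition $H=U\,\mathrm{diag}(\mathbf{q})\,U^\dagger$, where $U$ is unitary and $\mathbf{q}\in\mathbb{R}^d$, and let $t\ge 1/d$. Then $$\min_{\rho\in S^t}\|\rho-H\|_2^2=\min_{\mathbf{p}\in P(t)}\|\mathbf{p}-\mathbf{q}\|_2^2,$$ and if $\mathbf{p}^*$ is a minimizer of the right-hand side then $U\,\mathrm{diag}(\mathbf{p}^* )\,U^\dagger$ is a minimizer of the left-hand side.
   Context: $\|A\|_2=\sqrt{\mathrm{Tr}(A^\dagger A)}$ is the Frobenius norm and $\|\mathbf{x}\|_2$ the Euclidean norm. $S^t=\{\rho\succeq 0,\ \mathrm{Tr}\rho=1,\ \mathrm{Tr}(\rho^2)\le t\}$ (on $\mathbb{C}^d$). $P(t)=\{\mathbf{p}\in\mathbb{R}^d:\mathbf{p}\ge0,\ \sum_i\mathbf{p}_i=1,\ \mathbf{p}\cdot\mathbf{p}\le t\}$. *)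

From mathcomp Require Import all_boot all_order all_algebra.
From mathcomp Require Import reals.
From mathcomp.real_closed Require Import complex.
From mathcomp Require Export spectral.

Set Implicit Arguments.
Unset Strict Implicit.
Unset Printing Implicit Defensive.

Import Order.TTheory GRing.Theory Num.Theory.
Local Open Scope ring_scope.
Local Open Scope sesquilinear_scope.

Section Defs.
Variable R : realType.
Local Notation C := R[i].

Definition adj_mx (m n : nat) (A : 'M[C]_(m, n)) : 'M[C]_(n, m) := A ^t*.

Definition is_hermitian (d : nat) (A : 'M[C]_d) : Prop := adj_mx A = A.

Definition psd (d : nat) (A : 'M[C]_d) : Prop :=
  is_hermitian A /\ forall x : 'rV[C]_d, 0 <= (x *m A *m adj_mx x) 0 0.

(* squared Frobenius norm ||A||_2^2 = Tr(A^dagger A) (a complex number that is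
   real and nonnegative) *)
Definition frob2 (d : nat) (A : 'M[C]_d) : C := \tr (adj_mx A *m A).

Definition St (d : nat) (t : R) (rho : 'M[C]_d) : Prop :=
  psd rho /\ \tr rho = 1 /\ \tr (rho *m rho) <= (t%:C)%C.

Definition eucl2 (d : nat) (x : 'rV[R]_d) : R := \sum_(i < d) x 0 i ^+ 2.

Definition Pt (d : nat) (t : R) (p : 'rV[R]_d) : Prop :=
  (forall i, 0 <= p 0 i) /\ \sum_(i < d) p 0 i = 1 /\ eucl2 p <= t.

Definition cdiag (d : nat) (x : 'rV[R]_d) : 'M[C]_d :=
  diag_mx (map_mx (fun r => (r%:C)%C) x).

Definition is_minimizer (T : Type) (V : porderType ring_display)
    (A : T -> Prop) (f : T -> V) (x : T) : Prop :=
  A x /\ forall y, A y -> (f x <= f y)%O.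

End Defs.

(* Conjugating by the unitary U is an isometry for the Frobenius norm and maps
   S^t onto itself, so rho - H may be replaced by s - diag(q) with
   s = U^dagger rho U in S^t.  Deleting the off-diagonal entries of s (pinching)
   can only decrease both ||s - diag(q)||_2 and Tr(s^2), and the diagonal of a
   density matrix is a probability vector; hence the diagonal p of s lies in
   P(t) and ||p - q||_2 <= ||rho - H||_2.  Conversely U diag(p) U^dagger lies in
   S^t at distance exactly ||p - q||_2 from H.  A minimizer over P(t) exists
   because P(t) is compact and, as t >= 1/d, contains the uniform vector. *)

From mathcomp Require Import all_boot all_order all_algebra.
From mathcomp Require Import reals.
From mathcomp.real_closed Require Import complex.
From mathcomp Require Import spectral.
From mathcomp Require Import classical_sets topology normedtype derive.

Set Implicit Arguments.
Unset Strict Implicit.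
Unset Printing Implicit Defensive.
Import Order.TTheory GRing.Theory Num.Theory.
Import numFieldNormedType.Exports.
Local Open Scope ring_scope.
Local Open Scope sesquilinear_scope.

Section DensityMatrices.
Variable R : realType.
Local Notation C := R[i].
Variable d : nat.
Implicit Types (A B M U : 'M[C]_d) (x p q : 'rV[R]_d).

Lemma adj_mxM m n k (A : 'M[C]_(m, n)) (B : 'M[C]_(n, k)) :
  adj_mx (A *m B) = adj_mx B *m adj_mx A.
Proof. by rewrite /adj_mx trmx_mul map_mxM. Qed.

Lemma adj_mxK m n (A : 'M[C]_(m, n)) : adj_mx (adj_mx A) = A.
Proof. exact: trmxCK. Qed.

Lemma unitarymx_mulmx_adj U : U \is unitarymx -> U *m adj_mx U = 1%:M.
Proof. by move/unitarymxP. Qed.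

Lemma adj_mulmx_unitarymx U : U \is unitarymx -> adj_mx U *m U = 1%:M.
Proof.
by rewrite -trmxC_unitary => /unitarymxP; rewrite [_ ^t* ^t*]trmxCK.
Qed.

Lemma adj_unitarymx U : U \is unitarymx -> adj_mx U \is unitarymx.
Proof. by rewrite /adj_mx trmxC_unitary. Qed.

Section UnitaryConjugation.
Variables (U : 'M[C]_d) (U_unitary : U \is unitarymx).
Local Notation conj A := (U *m A *m adj_mx U).

Lemma unitary_conjM A B : conj A *m conj B = conj (A *m B).
Proof.
by rewrite !mulmxA -[_ *m adj_mx U *m U]mulmxA adj_mulmx_unitarymx // mulmx1.
Qed.

Lemma unitary_conjB A B : conj A - conj B = conj (A - B).
Proof. by rewrite -mulmxBl -mulmxBr. Qed.

Lemma adj_unitary_conj A : adj_mx (conj A) = conj (adj_mx A).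
Proof. by rewrite !adj_mxM adj_mxK mulmxA. Qed.

Lemma mxtrace_unitary_conj A : \tr (conj A) = \tr A.
Proof.
by rewrite mxtrace_mulC mulmxA adj_mulmx_unitarymx // mul1mx.
Qed.

Lemma frob2_unitary_conj A : frob2 (conj A) = frob2 A.
Proof.
by rewrite /frob2 adj_unitary_conj unitary_conjM mxtrace_unitary_conj.
Qed.

End UnitaryConjugation.

Lemma sqr_Re_le_sqr_norm (z : C) : (complex.Re z ^+ 2)%:C%C <= `|z| ^+ 2.
Proof.
case: z => a b; rewrite normCK /= lecE /=.
by rewrite mulrN mulrC addNr eqxx mulrN opprK -!expr2 lerDl sqr_ge0.
Qed.

Definition real_diag A : 'rV[R]_d := \row_i complex.Re (A i i).

Lemma frob2E A : frob2 A = \sum_i \sum_j `|A j i| ^+ 2.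
Proof.
rewrite /frob2 /mxtrace; apply: eq_bigr => i _; rewrite mxE.
apply: eq_bigr => j _.
by rewrite /adj_mx !mxE normCK mulrC.
Qed.

Lemma eucl2_real_diag_le_frob2 A : (eucl2 (real_diag A))%:C%C <= frob2 A.
Proof.
rewrite frob2E /eucl2 rmorph_sum; apply: ler_sum => i _.
rewrite (bigD1 i) //= mxE; apply: le_trans (sqr_Re_le_sqr_norm _) _.
by rewrite lerDl sumr_ge0 // => j _; rewrite exprn_ge0.
Qed.

Lemma real_diagB A B : real_diag (A - B) = real_diag A - real_diag B.
Proof. by apply/rowP => i; rewrite !mxE raddfB. Qed.

Lemma cdiagB p q : cdiag (p - q) = cdiag p - cdiag q.
Proof.
apply/matrixP => i j; rewrite !mxE.
by case: eqP; rewrite ?mulr1n ?mulr0n ?subr0 ?rmorphB.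
Qed.

Lemma real_diag_cdiag x : real_diag (cdiag x) = x.
Proof. by apply/rowP => i; rewrite !mxE eqxx mulr1n. Qed.

Lemma conjC_real_complex (r : R) : (r%:C%C)^* = r%:C%C :> C.
Proof. exact: conjc_real. Qed.

Lemma adj_cdiag x : adj_mx (cdiag x) = cdiag x.
Proof.
apply/matrixP => i j; rewrite /adj_mx !mxE.
have [->|_] := eqVneq i j; last by rewrite mulr0n conjC0.
by rewrite mulr1n conjC_real_complex.
Qed.

Lemma mxtrace_cdiag x : \tr (cdiag x) = (\sum_i x 0 i)%:C%C.
Proof.
by rewrite mxtrace_diag rmorph_sum; apply: eq_bigr => i _; rewrite mxE.
Qed.

Lemma frob2_cdiag x : frob2 (cdiag x) = (eucl2 x)%:C%C.
Proof.
rewrite /frob2 adj_cdiag mulmx_diag mxtrace_diag rmorph_sum.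
by apply: eq_bigr => i _; rewrite !mxE rmorphXn expr2.
Qed.

Lemma psd_conj M A : psd A -> psd (M *m A *m adj_mx M).
Proof.
move=> [A_herm A_quad]; split.
  by rewrite /is_hermitian !adj_mxM adj_mxK A_herm mulmxA.
move=> x; have -> : x *m (M *m A *m adj_mx M) *m adj_mx x
                    = x *m M *m A *m adj_mx (x *m M) by rewrite adj_mxM !mulmxA.
exact: A_quad.
Qed.

Lemma psd_cdiag x : (forall i, 0 <= x 0 i) -> psd (cdiag x).
Proof.
move=> x_ge0; split; first exact: adj_cdiag.
move=> y; rewrite mul_mx_diag !mxE; apply: sumr_ge0 => j _.
rewrite /adj_mx !mxE mulrAC -normCK mulr_ge0 ?exprn_ge0 //.
by rewrite ler0c.
Qed.

Lemma psd_diag_ge0 A i : psd A -> 0 <= A i i.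
Proof.
move=> [_ /(_ (delta_mx 0 i))].
have -> : adj_mx (delta_mx 0 i : 'rV[C]_d) = delta_mx i 0.
  apply/matrixP => a b; rewrite !mxE andbC.
  by case: (_ && _); rewrite ?conjC0 ?conjC1.
by rewrite -rowE -colE !mxE.
Qed.

Lemma psd_diag_real A i : psd A -> A i i = (real_diag A 0 i)%:C%C.
Proof.
move=> /(psd_diag_ge0 i) Aii_ge0.
by rewrite mxE {1}[A i i]complexE (ger0_Im Aii_ge0) mulr0 addr0.
Qed.

Section PurityBall.
Variable t : R.

Lemma St_unitary_conj U rho :
  U \is unitarymx -> St t rho -> St t (U *m rho *m adj_mx U).
Proof.
move=> U_unitary [rho_psd [tr_rho tr_rho2]]; split; first exact: psd_conj.
by rewrite unitary_conjM // !mxtrace_unitary_conj.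
Qed.

Lemma St_cdiag p : Pt t p -> St t (cdiag p).
Proof.
move=> [p_ge0 [sum_p eucl2_p]]; split; first exact: psd_cdiag.
rewrite mxtrace_cdiag sum_p; split => //.
by rewrite -{1}[cdiag p]adj_cdiag -/(frob2 _) frob2_cdiag lecR.
Qed.

Lemma Pt_real_diag s : St t s -> Pt t (real_diag s).
Proof.
move=> [s_psd [tr_s tr_s2]]; split; last split.
- by move=> i; rewrite -ler0c -psd_diag_real // psd_diag_ge0.
- apply: (@complexI R); rewrite rmorph_sum rmorph1 -tr_s.
  by apply: eq_bigr => i _; rewrite (psd_diag_real i s_psd).
- rewrite -lecR; apply: le_trans (eucl2_real_diag_le_frob2 s) _.
  by case: s_psd => s_herm _; rewrite /frob2 s_herm.
Qed.

End PurityBall.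

Lemma St_dist_ge_Pt_dist t U q rho : U \is unitarymx -> St t rho ->
  exists2 p, Pt t p &
    (eucl2 (p - q))%:C%C <= frob2 (rho - U *m cdiag q *m adj_mx U).
Proof.
move=> U_unitary rho_St; set s := adj_mx U *m rho *m U.
have rhoE : rho = U *m s *m adj_mx U.
  rewrite !mulmxA unitarymx_mulmx_adj // mul1mx.
  by rewrite -mulmxA unitarymx_mulmx_adj // mulmx1.
exists (real_diag s).
  apply: Pt_real_diag; rewrite /s -{2}[U]adj_mxK.
  by apply: St_unitary_conj => //; exact: adj_unitarymx.
rewrite rhoE unitary_conjB // frob2_unitary_conj //.
by rewrite -{1}[q]real_diag_cdiag -real_diagB eucl2_real_diag_le_frob2.
Qed.

End DensityMatrices.

Local Open Scope classical_set_scope.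

Section ProbabilityBall.
Variables (R : realType) (d : nat).
Implicit Types (t : R) (p q : 'rV[R]_d).

Lemma continuous_eucl2B q : continuous (fun p => eucl2 (p - q)).
Proof.
apply: (continuous_big add_continuous) => i _ p.
have coordB_cont : {for p, continuous (fun p => (p - q) 0 i)}.
  apply: (continuous_comp (f := fun p => p - q) (g := fun p => p 0 i)).
    by apply: continuousB => //; exact: cst_continuous.
  exact: coord_continuous.
exact: continuousM.
Qed.

Lemma continuous_sum_coord : continuous (fun p : 'rV[R]_d => \sum_i p 0 i).
Proof.
by apply: (continuous_big add_continuous) => i _; exact: coord_continuous.
Qed.

Lemma Pt_closed t : closed [set p : 'rV[R]_d | Pt t p].
Proof.
have -> : [set p : 'rV[R]_d | Pt t p] =
    (\bigcap_i [set p : 'rV[R]_d | 0 <= p 0 i]) `&`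
    ([set p : 'rV[R]_d | \sum_i p 0 i = 1] `&` [set p | eucl2 (p - 0) <= t]).
  apply/seteqP; split => p /=; rewrite subr0.
    by move=> [p_ge0 p_rest]; split => // i _; exact: p_ge0.
  by move=> [p_ge0 p_rest]; split => // i; exact: p_ge0.
apply: closedI; [apply: closed_bigI => i _ | apply: closedI].
- by apply: preimage_closed (@closed_ge _ _) => p _; exact: coord_continuous.
- by apply: preimage_closed (@closed_eq _ _) => p _; exact: continuous_sum_coord.
- by apply: preimage_closed (@closed_le _ _) => p _; exact: continuous_eucl2B.
Qed.

Lemma Pt_coord_le1 t p i : Pt t p -> p 0 i <= 1.
Proof.
move=> [p_ge0 [<- _]]; rewrite (bigD1 i) //= lerDl.
by apply: sumr_ge0 => j _; exact: p_ge0.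
Qed.

Lemma Pt_compact t : compact [set p : 'rV[R]_d | Pt t p].
Proof.
apply: subclosed_compact (@Pt_closed t)
  (@rV_compact R d (fun=> `[0, 1]) (fun=> @segment_compact R 0 1)) _.
move=> p Pt_p i /=; rewrite in_itv /= (Pt_coord_le1 i Pt_p) andbT.
by case: Pt_p.
Qed.

Lemma Pt_uniform t :
  (0 < d)%N -> d%:R^-1 <= t -> Pt t (const_mx d%:R^-1 : 'rV[R]_d).
Proof.
move=> d_gt0 t_ge; have d_neq0 : d%:R != 0 :> R by rewrite pnatr_eq0 -lt0n.
have coordE i : (const_mx d%:R^-1 : 'rV[R]_d) 0 i = d%:R^-1 by rewrite mxE.
split; first by move=> i; rewrite coordE invr_ge0 ler0n.
split.
  rewrite (eq_bigr _ (fun i _ => coordE i)) sumr_const card_ord.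
  by rewrite -(mulr_natr d%:R^-1) mulVf.
rewrite /eucl2 (eq_bigr _ (fun i _ => congr1 (fun x => x ^+ 2) (coordE i))).
rewrite sumr_const card_ord -(mulr_natr (d%:R^-1 ^+ 2)).
by rewrite expr2 -mulrA mulVf // mulr1.
Qed.

Lemma exists_Pt_minimizer t q : (0 < d)%N -> d%:R^-1 <= t ->
  exists p, is_minimizer (@Pt R d t) (fun x => eucl2 (x - q)) p.
Proof.
move=> d_gt0 t_ge.
have Pt_nonempty : [set p : 'rV[R]_d | Pt t p] !=set0.
  by exists (const_mx d%:R^-1); exact: Pt_uniform.
have [p Pt_p p_min] := EVT_min_rV Pt_nonempty (@Pt_compact t)
  (continuous_subspaceT (@continuous_eucl2B q)).
exists p; split => [|x Pt_x]; first by rewrite inE in Pt_p.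
by apply: p_min; rewrite inE.
Qed.

End ProbabilityBall.

Theorem mainTheorem4 (R : realType) (d : nat) (d_gt0 : (0 < d)%N)
    (H U : 'M[R[i]]_d) (q : 'rV[R]_d) (t : R)
    (HH : is_hermitian H) (HU : U \is unitarymx)
    (Hdec : H = U *m cdiag q *m adj_mx U)
    (Ht : (d%:R)^-1 <= t) :
  (* the two minima exist and are equal *)
  (exists rho : 'M[R[i]]_d, exists p : 'rV[R]_d,
      is_minimizer (@St R d t) (fun r => frob2 (r - H)) rho /\
      is_minimizer (@Pt R d t) (fun x => eucl2 (x - q)) p /\
      frob2 (rho - H) = ((eucl2 (p - q))%:C)%C) /\
  (* any minimizer p* of the right-hand side yields the minimizer
     U diag(p* ) U^dagger of the left-hand side *)
  (forall pstar : 'rV[R]_d,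
      is_minimizer (@Pt R d t) (fun x => eucl2 (x - q)) pstar ->
      is_minimizer (@St R d t) (fun r => frob2 (r - H))
                   (U *m cdiag pstar *m adj_mx U)).
Proof.
have dist_conj_cdiag p :
    frob2 (U *m cdiag p *m adj_mx U - H) = (eucl2 (p - q))%:C%C.
  by rewrite Hdec unitary_conjB // frob2_unitary_conj // -cdiagB frob2_cdiag.
have conj_minimizer pstar :
    is_minimizer (@Pt R d t) (fun x => eucl2 (x - q)) pstar ->
    is_minimizer (@St R d t) (fun r => frob2 (r - H))
                 (U *m cdiag pstar *m adj_mx U).
  move=> [Pt_pstar pstar_min]; split; first exact/St_unitary_conj/St_cdiag.
  move=> rho /(St_dist_ge_Pt_dist q HU) [p Pt_p le_p].
  by rewrite dist_conj_cdiag Hdec; apply: le_trans le_p; rewrite lecR pstar_min.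
split=> //; have [pstar pstar_min] := exists_Pt_minimizer q d_gt0 Ht.
exists (U *m cdiag pstar *m adj_mx U), pstar.
by split; [exact: conj_minimizer | split; last exact: dist_conj_cdiag].
Qed.
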